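(* Let $(\Omega,\mathscr{A},\mu)$ be a finite measure space, let $P$ be a finite set, and let $\{A_p\}_{p\in P}\subseteq\mathscr{A}$ be a family of measurable sets. Let $\{B_1,B^*_1\},\{B_2,B^*_2\},\dots,\{B_k,B^*_k\}$ be pairs of subsets of $P$ such that for every $i\in\{1,\dots,k\}$ we have $B_i\cap B^*_i=\emptyset$ and $$\bigcap_{p\in B_i}A_p\subseteq\bigcup_{p\in B^*_i}A_p .$$ For $i\in\{1,\dots,k\}$ put $$\mathscr{B}_i=\{I\subseteq P:\ I\supseteq B_i,\ \text{and } I\not\supseteq B_j\setminus B^*_i \text{ for every } j<i\},$$ and $\mathscr{B}=\mathscr{B}_1\cup\mathscr{B}_2\cup\cdots\cup\mathscr{B}_k$. Then $$\mu\Big(\bigcap_{p\in P}\overline{A}_p\Big)=\sum_{I\in 2^P\setminus\mathscr{B}}(-1)^{|I|}\,\mu\Big(\bigcap_{i\in I}A_i\Big).$$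
   Context: $\overline{A}_p=\Omega\setminus A_p$ denotes the complement of $A_p$; $2^P$ denotes the power set of $P$; the intersection over the empty index set is $\Omega$. No ordering on $P$ is assumed; the pairs are indexed $1,\dots,k$ and the condition ''$j<i$'' refers to these indices. *)

From HB Require Import structures.
From mathcomp Require Import all_boot all_order all_algebra.
From mathcomp Require Import all_classical all_reals all_analysis.
Set Implicit Arguments. Unset Strict Implicit. Unset Printing Implicit Defensive.
Import Order.TTheory GRing.Theory Num.Theory.
Local Open Scope classical_set_scope.
Local Open Scope ring_scope.

(* intersection of the A p over p in the finite set I (= setT when I = set0) *)
Definition interA (T : Type) (P : finType) (A : P -> set T) (I : {set P}) : set T :=
  \bigcap_(p in [set p | p \in I]) A p.

Definition calBi (P : finType) (k : nat) (B Bs : 'I_k -> {set P}) (i : 'I_k)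
  : {set {set P}} :=
  [set I : {set P} | (B i \subset I) &&
     [forall j : 'I_k, (j < i)%N ==> ~~ ((B j :\: Bs i) \subset I)]].

Definition calB (P : finType) (k : nat) (B Bs : 'I_k -> {set P}) : {set {set P}} :=
  \bigcup_(i < k) calBi B Bs i.

(* Split the space into the atoms E_S = {x | {p | x \in A p} = S}.  Then
   mu (\bigcap_(p in I) A p) is the sum of mu E_S over S containing I, so the
   right-hand side equals the sum over S of mu E_S times the alternating sum
   of (-1)^|I| over the I outside calB with I \subset S.  When E_S is nonempty,
   the hypothesis gives a point of Bs i in S whenever B i \subset S; toggling it
   is a sign-reversing involution of the I \subset S in calBi i, and the calBi i
   are pairwise disjoint, so that alternating sum is the one over all subsets
   of S, which is [S == set0].  Only the atom E_set0 = \bigcap_p ~` A p survives. *)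

From HB Require Import structures.
From mathcomp Require Import all_boot all_order all_algebra.
Import Order.TTheory GRing.Theory Num.Theory.
Set Implicit Arguments. Unset Strict Implicit. Unset Printing Implicit Defensive.

Local Open Scope ring_scope.

Section Toggle.
Variables (P : finType) (q : P).

Definition toggle (I : {set P}) : {set P} := if q \in I then I :\ q else q |: I.

Lemma toggleK : involutive toggle.
Proof.
move=> I; rewrite /toggle; case qI: (q \in I).
  by rewrite setD11 setD1K.
by rewrite setU11 setU1K // qI.
Qed.

Lemma sign_toggle (R : pzRingType) I : (-1) ^+ #|toggle I| = - (-1) ^+ #|I| :> R.
Proof.
rewrite /toggle; case: ifP => qI; last by rewrite cardsU1 qI exprS mulN1r.
by rewrite [in RHS](cardsD1 q I) qI exprS mulN1r opprK.
Qed.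

Lemma subset_toggle (C I : {set P}) : q \notin C -> (C \subset toggle I) = (C \subset I).
Proof.
move=> qC; rewrite /toggle; case: ifP => _; first by rewrite subsetD1 qC andbT.
apply/idP/idP => [/subsetP CqI|CI]; last exact: subset_trans CI (subsetU1 _ _).
apply/subsetP => x xC; case/setU1P: (CqI x xC) => // xq.
by rewrite -xq xC in qC.
Qed.

Lemma toggle_subset (S I : {set P}) : q \in S -> I \subset S -> toggle I \subset S.
Proof.
move=> qS IS; rewrite /toggle; case: ifP => _.
  exact: subset_trans (subsetDl _ _) IS.
by rewrite subUset sub1set qS.
Qed.

Lemma alternating_sum_toggle_closed (R : numDomainType) (X : pred {set P}) :
  (forall I, X I -> X (toggle I)) -> \sum_(I | X I) (-1) ^+ #|I| = 0 :> R.
Proof.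
move=> Xtoggle; set s := \sum_(I | X I) _.
have s_opp : s = - s.
  rewrite {1}/s (reindex_inj (can_inj toggleK)) /s -sumrN.
  apply: eq_big => [I|I _]; last exact: sign_toggle.
  by apply/idP/idP => [/Xtoggle|/Xtoggle]; rewrite ?toggleK.
have s2 : s *+ 2 = 0 by rewrite mulr2n {2}s_opp subrr.
by move/eqP: s2; rewrite mulrn_eq0 => /eqP.
Qed.

End Toggle.

Lemma alternating_sum_subsets (R : numDomainType) (P : finType) (S : {set P}) :
  \sum_(I : {set P} | I \subset S) (-1) ^+ #|I| = (S == set0)%:R :> R.
Proof.
have [->|/set0Pn [q qS]] := eqVneq S set0.
  by rewrite (big_pred1 set0) ?cards0 // => I; rewrite /= subset0.
by rewrite (alternating_sum_toggle_closed (q := q)) // => I; apply: toggle_subset.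
Qed.

Section AlternatingSumCalB.
Variables (P : finType) (k : nat) (B Bs : 'I_k -> {set P}).
Hypothesis disjoint_B_Bs : forall i, B i :&: Bs i = set0.

Lemma calBi_disjoint I i j : I \in calBi B Bs i -> I \in calBi B Bs j -> i = j.
Proof.
wlog lt_ji : i j / (j < i)%N => [hwlog|].
  move=> Ii Ij; case: (ltngtP i j) => [lt_ij|lt_ji|/val_inj //].
    exact/esym/(hwlog j i).
  exact: hwlog.
rewrite !inE => /andP[_ /forallP/(_ j)] + /andP[BjI _].
by rewrite lt_ji /= => /negP[]; exact: subset_trans (subsetDl _ _) BjI.
Qed.

Variables (R : numDomainType) (S : {set P}).
Hypothesis S_meets_Bs : forall i, B i \subset S -> Bs i :&: S != set0.

Lemma alternating_sum_calBi i :
  \sum_(I : {set P} | (I \subset S) && (I \in calBi B Bs i)) (-1) ^+ #|I| = 0 :> R.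
Proof.
have [BiS|BiS] := boolP (B i \subset S); last first.
  apply: big_pred0 => I; apply/negP => /andP[IS]; rewrite inE => /andP[BiI _].
  by rewrite (subset_trans BiI IS) in BiS.
have [q] := set0Pn _ (S_meets_Bs BiS); rewrite inE => /andP[qBs qS].
have qB : q \notin B i.
  by apply: contraT; rewrite negbK => qB; rewrite -(in_set0 q) -(disjoint_B_Bs i) inE qB.
have qBD j : q \notin B j :\: Bs i by rewrite inE qBs.
apply: (alternating_sum_toggle_closed (q := q)) => I /andP[IS].
rewrite !inE toggle_subset // subset_toggle // => /andP[-> /forallP IBj] /=.
by apply/forallP => j; rewrite subset_toggle.
Qed.

Lemma alternating_sum_calB :
  \sum_(I : {set P} | (I \subset S) && (I \in calB B Bs)) (-1) ^+ #|I| = 0 :> R.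
Proof.
rewrite (eq_bigr (fun I => \sum_(i | I \in calBi B Bs i) (-1) ^+ #|I|)); last first.
  move=> I /andP[_ /bigcupP[i _ Ii]].
  rewrite (big_pred1 i) // => j.
  by apply/idP/eqP => [Ij|->] //; exact: calBi_disjoint Ij Ii.
rewrite (exchange_big_dep xpredT) //= big1 // => i _.
rewrite -[RHS](alternating_sum_calBi i); apply: eq_bigl => I.
have [Ii|] := boolP (I \in calBi B Bs i); last by rewrite !andbF.
by rewrite !andbT andb_idr // => _; apply/bigcupP; exists i.
Qed.

Lemma alternating_sum_notin_calB :
  \sum_(I in ~: calB B Bs | I \subset S) (-1) ^+ #|I| = (S == set0)%:R :> R.
Proof.
rewrite -(alternating_sum_subsets R S) [RHS](bigID (mem (calB B Bs))) /=.
rewrite alternating_sum_calB add0r; apply: eq_bigl => I.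
by rewrite inE andbC.
Qed.

End AlternatingSumCalB.

(* Imported only now: classical_sets shadows finset names (set0, subsetP, ...). *)
From mathcomp Require Import all_classical all_reals all_analysis.
Local Open Scope classical_set_scope.

Section Atoms.
Variables (T : Type) (P : finType) (A : P -> set T).

Definition signature (x : T) : {set P} := [set p | `[< A p x >]].

Definition atom (S : {set P}) : set T := signature @^-1` [set S].

Lemma atomE S : atom S = \bigcap_(p in [set: P]) (if p \in S then A p else ~` A p).
Proof.
apply/seteqP; split=> [x <- p _|x Sx]; rewrite ?inE.
  by case: asboolP.
apply/setP => p; rewrite inE; move: (Sx p I).
by case: (p \in S) => Apx; apply/asboolP.
Qed.

Lemma interA_signature J x : interA A J x <-> J \subset signature x.
Proof.
split=> [Jx|/fintype.subsetP JS p /= /JS]; last by rewrite inE => /asboolP.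
by apply/fintype.subsetP => p pJ; rewrite inE; apply/asboolP; exact: Jx.
Qed.

Lemma setI_interA_atom J S :
  interA A J `&` atom S = if J \subset S then atom S else set0.
Proof.
apply/seteqP; split=> [x [/interA_signature Jx Sx]|x]; first by rewrite -Sx Jx.
by case: ifP => // JS Sx; split=> //; apply/interA_signature; rewrite Sx.
Qed.

Lemma trivIset_atom : trivIset setT atom.
Proof. exact: trivIset_preimage1. Qed.

Lemma bigsetU_atom X : X = \big[setU/set0]_S (X `&` atom S).
Proof.
rewrite -bigcup_seq; apply/seteqP; split=> [x Xx|x [S _ []] //].
by exists (signature x); rewrite /= ?mem_index_enum.
Qed.

Lemma signature_meets (C D : {set P}) x :
  interA A C `<=` \bigcup_(p in [set p | p \in D]) A p ->
  C \subset signature x -> D :&: signature x != finset.set0.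
Proof.
move=> CD /interA_signature/CD [p /= Dp Apx]; apply/set0Pn; exists p.
by rewrite !inE Dp; apply/asboolP.
Qed.

End Atoms.

Section MeasureOfAtoms.
Variables (d : measure_display) (T : measurableType d) (R : realType).

Lemma measure_bigsetU_seq (mu : {measure set T -> \bar R}) (I : choiceType)
    (r : seq I) (F : I -> set T) :
  uniq r -> (forall i, measurable (F i)) -> trivIset setT F ->
  mu (\big[setU/set0]_(i <- r) F i) = (\sum_(i <- r) mu (F i))%E.
Proof.
move=> + mF /trivIsetP tF; elim: r => [|i r IHr]; first by rewrite !big_nil measure0.
rewrite cons_uniq => /andP[ir ur]; rewrite !big_cons measureU //.
- by congr (_ + _); apply: IHr.
- by apply: bigsetU_measurable => j _.
rewrite -bigcup_seq setI_bigcupr; apply: bigcup0 => j jr; apply: tF => //.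
by apply: contraNneq ir => ->.
Qed.

Variables (P : finType) (A : P -> set T).
Hypothesis mA : forall p, measurable (A p).

Lemma measurable_atom S : measurable (atom A S).
Proof.
rewrite atomE; apply: fin_bigcap_measurable => [|p _]; first exact: finite_finset.
by case: ifP => _; [exact: mA | exact: measurableC].
Qed.

Lemma measurable_interA J : measurable (interA A J).
Proof. by apply: fin_bigcap_measurable => [|p _]; [exact: finite_finset | exact: mA]. Qed.

Lemma measure_interA (mu : {measure set T -> \bar R}) J :
  mu (interA A J) = (\sum_(S : {set P} | J \subset S) mu (atom A S))%E.
Proof.
rewrite {1}(bigsetU_atom A (interA A J)) measure_bigsetU_seq ?index_enum_uniq //.
- rewrite [RHS]big_mkcond; apply: eq_bigr => S _.
  by rewrite setI_interA_atom; case: ifP; rewrite ?measure0.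
- by move=> S; apply: measurableI; [exact: measurable_interA | exact: measurable_atom].
exact/trivIset_setIl/trivIset_atom.
Qed.

Lemma sum_measure_interA (mu : {finite_measure set T -> \bar R})
    (Q : pred {set P}) (c : {set P} -> R) :
  (\sum_(J | Q J) (c J)%:E * mu (interA A J) =
   \sum_(S : {set P}) (\sum_(J | Q J && (J \subset S)) c J)%:E * mu (atom A S))%E.
Proof.
have mu_atom_fin S : mu (atom A S) \is a fin_num.
  by rewrite fin_num_measure //; exact: measurable_atom.
have distr J : ((c J)%:E * mu (interA A J) =
    \sum_(S : {set P} | J \subset S) (c J)%:E * mu (atom A S))%E.
  rewrite measure_interA fin_num_sume_distrr // => S S' _ _.
  exact: fin_num_adde_defl (mu_atom_fin _).
rewrite (eq_bigr _ (fun J _ => distr J)).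
rewrite (exchange_big_dep xpredT) //=; apply: eq_bigr => S _.
rewrite -sumEFin muleC fin_num_sume_distrr //.
by apply: eq_bigr => J _; rewrite muleC.
Qed.

End MeasureOfAtoms.

Theorem theorem2 (d : measure_display) (T : measurableType d) (R : realType)
  (mu : {finite_measure set T -> \bar R})
  (P : finType) (A : P -> set T) (mA : forall p, measurable (A p))
  (k : nat) (B Bs : 'I_k -> {set P})
  (hdisj : forall i, B i :&: Bs i = finset.set0)
  (hsub : forall i, interA A (B i) `<=` \bigcup_(p in [set p | p \in Bs i]) A p) :
  mu (\bigcap_(p in [set: P]) ~` A p) =
  (\sum_(I in ~: calB B Bs) ((-1) ^+ #|I|)%:E * mu (interA A I))%E.
Proof.
have -> : \bigcap_(p in [set: P]) ~` A p = atom A finset.set0.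
  by rewrite atomE; apply: eq_bigcapr => p _; rewrite finset.in_set0.
have atom_term (S : {set P}) :
    ((\sum_(I in ~: calB B Bs | I \subset S) (-1) ^+ #|I|)%:E * mu (atom A S) =
     if S == finset.set0 then mu (atom A S) else 0)%E.
  have [->|/set0P[x /= <-]] := eqVneq (atom A S) set0.
    by rewrite measure0 mule0; case: ifP.
  rewrite alternating_sum_notin_calB // => [|i].
    by case: eqP; rewrite ?mul1e ?mul0e.
  exact/signature_meets/hsub.
rewrite (sum_measure_interA mA) (eq_bigr _ (fun S _ => atom_term S)).
by rewrite -big_mkcond big_pred1_eq.
Qed.
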